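(* Let $m\ge1$ and $\Lambda^{\pm}_m=\mathbb Z[x_1^{\pm1},\dots,x_m^{\pm1}]^{S_m}$. Then $\Lambda^{\pm}_m$ is isomorphic to each of the following commutative rings: (1) the ring $U^+_{m,0}$ generated over $\mathbb Z$ by $u_i$ ($i\ge1$) and $\hat v_i$ ($i\ge0$) subject to the relations $R_I(w)=0$ for all $I\in\mathbb Z^{m+1}$, where $w_i=u_i-\hat v_{-m-i}$ for $i\in\mathbb Z$, with the conventions $u_0=1$ and $u_i=\hat v_i=0$ for $i<0$; (2) the ring $U^{\pm}_{m,0}$ generated over $\mathbb Z$ by $t$, $u_i$ ($i\ge1$) and $v_i$ ($i\ge1$) subject to the relations $R_I(w)=0$ for all $I\in\mathbb Z^{m+1}$, where $w_i=u_i-tv_{-m-i}$ for $i\in\mathbb Z$, with the conventions $u_0=v_0=1$ and $u_i=v_i=0$ for $i<0$.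
   Context: For an infinite sequence $z=(z_i)_{i\in\mathbb Z}$ and a finite sequence of integers $I=(i_1,\dots,i_p)\in\mathbb Z^p$, set $R_I(z)=\det\big(z_{i_\alpha+\beta-1}\big)_{1\le\alpha,\beta\le p}$. *)

From HB Require Import structures.
From mathcomp Require Import all_boot all_order all_algebra all_fingroup.
From mathcomp Require Import fraction.
From mathcomp Require Import mpoly.
From Stdlib Require Import ClassicalEpsilon.
From mathcomp Require Import ring.

Set Implicit Arguments.
Unset Strict Implicit.
Unset Printing Implicit Defensive.

Import GRing.Theory.
Local Open Scope ring_scope.

Notation tofracF := (@FracField.tofrac _).
Local Notation "x %:F" := (tofracF x).

(* Laurent polynomial ring Z[x_1^{+-1},...,x_m^{+-1}] realised inside the
   fraction field of Z[x_1,...,x_m]. *)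
Definition Frac (m : nat) := {fraction {mpoly int[m]}}.

Definition xprod (m : nat) : {mpoly int[m]} := \prod_(i < m) 'X_i.

(* f is a symmetric Laurent polynomial: f = p / (x_1...x_m)^k with p a
   symmetric polynomial. *)
Definition is_symLaurent (m : nat) (f : Frac m) : Prop :=
  exists (k : nat) (p : {mpoly int[m]}),
    p \is symmetric /\ f = p%:F / (xprod m ^+ k)%:F.
Arguments is_symLaurent m f : clear implicits.

Definition symLaurent_pred (m : nat) : pred (Frac m) :=
  fun f => if excluded_middle_informative (is_symLaurent m f) then true else false.
Arguments symLaurent_pred m : clear implicits.

Lemma symLaurentP (m : nat) (f : Frac m) : reflect (is_symLaurent m f) (f \in symLaurent_pred m).
Proof.
rewrite /in_mem /= /symLaurent_pred.
by case: excluded_middle_informative => h; constructor.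
Qed.

Lemma xprod_sym m : xprod m \is symmetric.
Proof. by rewrite /xprod -mesymnnE mesym_sym. Qed.

Lemma xprod_neq0 m : (xprod m)%:F != 0 :> Frac m.
Proof. by rewrite tofrac_eq0 /xprod -mesymnnE mesym_neq0. Qed.


Lemma divB_same (F : fieldType) (x y a b : F) : a != 0 -> b != 0 ->
  x / a - y / b = (x * b - y * a) / (a * b).
Proof. by move=> a0 b0; field; rewrite a0 b0. Qed.

Lemma symLaurent_subring m : subring_closed (symLaurent_pred m).
Proof.
have nz k : (xprod m ^+ k)%:F != 0 :> Frac m.
  by rewrite rmorphXn expf_neq0 // xprod_neq0.
split.
- apply/symLaurentP; exists 0%N, 1; split; first exact: rpred1.
  by rewrite expr0 rmorph1 divr1.
- move=> f g /symLaurentP [k [p [sp ->]]] /symLaurentP [l [q [sq ->]]].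
  apply/symLaurentP; exists (k + l)%N, (p * xprod m ^+ l - q * xprod m ^+ k).
  split.
    by rewrite rpredB // rpredM // rpredX // xprod_sym.
  rewrite (divB_same _ _ (nz k) (nz l)) exprD.
  by rewrite !(rmorphB, rmorphM).
- move=> f g /symLaurentP [k [p [sp ->]]] /symLaurentP [l [q [sq ->]]].
  apply/symLaurentP; exists (k + l)%N, (p * q); split; first exact: rpredM.
  by rewrite exprD !rmorphM /= invfM mulrACA.
Qed.

HB.instance Definition _ (m : nat) :=
  GRing.isSubringClosed.Build (Frac m) (symLaurent_pred m) (symLaurent_subring m).

Record SymLaurent (m : nat) := SymLaurentSub {
  symLaurent_val : Frac m;
  _ : symLaurent_val \in symLaurent_pred m }.

HB.instance Definition _ m := [isSub for @symLaurent_val m].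
HB.instance Definition _ m := [Choice of SymLaurent m by <:].
HB.instance Definition _ m := [SubChoice_isSubComNzRing of SymLaurent m by <:].

(* R_I(z) = det (z_{i_alpha + beta - 1})_{1 <= alpha, beta <= p} *)
Definition RI (B : comPzRingType) (p : nat) (z : int -> B) (I : 'I_p -> int) : B :=
  \det (\matrix_(a < p, b < p) z (I a + (b : nat)%:Z)%R).

(* Rings given by generators and relations, via their universal property:
   A is the commutative ring generated by the family g : G -> A subject to
   the relations rel iff g satisfies rel and, for every commutative ring B
   and every family h : G -> B satisfying rel, there is exactly one ring
   morphism A -> B sending g to h. *)
Definition presents (A : comNzRingType) (G : Type) (g : G -> A)
  (rel : forall B : comPzRingType, (G -> B) -> Prop) : Prop :=
  rel A g /\
  forall (B : comPzRingType) (h : G -> B), rel B h ->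
    (exists f : {rmorphism A -> B}, forall i, f (g i) = h i) /\
    (forall f1 f2 : {rmorphism A -> B},
       (forall i, f1 (g i) = h i) -> (forall i, f2 (g i) = h i) -> f1 =1 f2).

(* useq c (i) = 1 if i = 0, c (i-1) if i >= 1, 0 if i < 0  (c k = x_{k+1}) *)
Definition useq (B : comPzRingType) (c : nat -> B) (i : int) : B :=
  match i with
  | Posz 0 => 1
  | Posz (S k) => c k
  | Negz _ => 0
  end.

Definition vseq (B : comPzRingType) (c : nat -> B) (i : int) : B :=
  match i with
  | Posz k => c k
  | Negz _ => 0
  end.

(* (1) generators u_i (i >= 1) : inl (i-1);  hat v_i (i >= 0) : inr i *)
Definition gensUplus := (nat + nat)%type.

Definition w_plus (m : nat) (B : comPzRingType) (h : gensUplus -> B) (i : int) : B :=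
  useq (fun k => h (inl k)) i - vseq (fun k => h (inr k)) (- (m%:Z) - i).

Definition rel_Uplus (m : nat) (B : comPzRingType) (h : gensUplus -> B) : Prop :=
  forall I : 'I_m.+1 -> int, RI (w_plus m h) I = 0.

(* (2) generators t : None;  u_i (i >= 1) : Some (inl (i-1));
       v_i (i >= 1) : Some (inr (i-1)) *)
Definition gensUpm := option (nat + nat)%type.

Definition w_pm (m : nat) (B : comPzRingType) (h : gensUpm -> B) (i : int) : B :=
  useq (fun k => h (Some (inl k))) i
  - h None * useq (fun k => h (Some (inr k))) (- (m%:Z) - i).

Definition rel_Upm (m : nat) (B : comPzRingType) (h : gensUpm -> B) : Prop :=
  forall I : 'I_m.+1 -> int, RI (w_pm m h) I = 0.
Arguments rel_Uplus m B h : clear implicits.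
Arguments rel_Upm m B h : clear implicits.

From HB Require Import structures.
From mathcomp Require Import all_boot all_order all_algebra.
From mathcomp Require Import fraction mpoly zify.
From Stdlib Require Import ClassicalEpsilon FunctionalExtensionality.

(* Put c_j = (-1)^j e_j.  Since e_m is a unit, the recurrence
   sum_(j <= m) c_j w_(k-j) = 0 runs in both directions, so it has a unique
   two-sided solution h in Lambda with h_0 = 1 and h_(-i) = 0 for 0 < i < m;
   for k >= 0, h_k is the complete homogeneous symmetric function.  For any
   sequence w with this initial window, all (m+1)-minors R_I(w) vanish exactly
   when w satisfies such a recurrence with c_0 = 1; c is then the inverse power
   series of w and c_m is a unit with inverse -w_(-m).  By the fundamental
   theorem of symmetric polynomials, Lambda is generated by e_1, ..., e_m and
   e_m^-1 with only the relation e_m e_m^-1 = 1, hence f |-> f o h is a bijection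
   from ring maps Lambda -> B onto such sequences in B.  The two presentations
   re-encode w: u_i = w_i and hat v_i = -w_(-m-i), resp. t = -w_(-m) and
   v_i = t^-1 hat v_i. *)

Set Implicit Arguments.
Unset Strict Implicit.
Unset Printing Implicit Defensive.

Import GRing.Theory.
Local Open Scope ring_scope.

Section LinearRecurrence.
Variables (B : comPzRingType) (m : nat).
Implicit Types (c : nat -> B) (w : int -> B).

Definition linrec c w (k : int) := \sum_(j < m.+1) c j * w (k - j%:Z) = 0.

Definition init_window w :=
  w 0 = 1 /\ forall i : nat, (0 < i < m)%N -> w (- i%:Z) = 0.

Lemma linrec_window_sum c w (k : nat) : init_window w -> (0 < k <= m)%N ->
  \sum_(j < m.+1) c j * w (k%:Z - j%:Z) =
  c k + \sum_(j < k) c j * w (k%:Z - j%:Z).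
Proof.
move=> [w0 wneg] /andP [k0 km].
rewrite -(big_mkord xpredT (fun j => c j * w (k%:Z - j%:Z))).
rewrite (big_cat_nat (n := k.+1)) //= [X in _ + X]big1_seq ?addr0; last first.
  move=> j /andP [_]; rewrite mem_index_iota => /andP [kj jm].
  have -> : k%:Z - j%:Z = - (j - k)%N%:Z by lia.
  by rewrite wneg ?mulr0 //; lia.
by rewrite big_nat_recr //= subrr w0 mulr1 addrC big_mkord.
Qed.

Lemma linrec_solve_last c w k : linrec c w k ->
  c m * w (k - m%:Z) = - \sum_(j < m) c j * w (k - j%:Z).
Proof. by rewrite /linrec big_ord_recr /= addrC => /eqP; rewrite addr_eq0 => /eqP. Qed.

Lemma linrec_solve_first c w k : c 0%N = 1 -> linrec c w k ->
  w k = - \sum_(j < m) c j.+1 * w (k - j.+1%:Z).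
Proof.
move=> c0; rewrite /linrec big_ord_recl /= c0 mul1r subr0 => /eqP.
by rewrite addr_eq0 => /eqP.
Qed.

Fixpoint series_invs w (n : nat) : seq B :=
  if n is n'.+1 then
    let s := series_invs w n' in
    rcons s (- \sum_(j < n'.+1) s`_j * w (n'.+1%:Z - j%:Z))
  else [:: 1].

Definition series_inv w j := (series_invs w j)`_j.

Lemma size_series_invs w n : size (series_invs w n) = n.+1.
Proof. by elim: n => //= n IH; rewrite size_rcons IH. Qed.

Lemma nth_series_invs w n j : (j <= n)%N -> (series_invs w n)`_j = series_inv w j.
Proof.
elim: n => [|n IH]; first by rewrite leqn0 => /eqP ->.
rewrite leq_eqVlt => /orP [/eqP -> //|]; rewrite ltnS => jn.
by rewrite /= nth_rcons size_series_invs ltnS jn IH.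
Qed.

Lemma series_inv0 w : series_inv w 0 = 1.
Proof. by []. Qed.

Lemma series_invS w n : series_inv w n.+1 =
  - \sum_(j < n.+1) series_inv w j * w (n.+1%:Z - j%:Z).
Proof.
rewrite /series_inv /= nth_rcons size_series_invs ltnn eqxx; congr (- _).
by apply: eq_bigr => j _; rewrite nth_series_invs // -ltnS.
Qed.

Lemma linrec_series_inv w (k : nat) : init_window w -> (0 < k <= m)%N ->
  linrec (series_inv w) w k.
Proof.
move=> ww km; rewrite /linrec linrec_window_sum //.
by case: k km => // k _; rewrite series_invS addNr.
Qed.

Lemma linrec_coef_series_inv c w : init_window w -> c 0%N = 1 ->
    (forall k : nat, (0 < k <= m)%N -> linrec c w k) ->
  forall j, (j <= m)%N -> c j = series_inv w j.
Proof.
move=> ww c0 cw; elim/ltn_ind => -[|j] IH jm; first by rewrite c0.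
have /eqP := cw j.+1 jm; rewrite /linrec linrec_window_sum // addr_eq0 => /eqP ->.
rewrite series_invS; congr (- _); apply: eq_bigr => i _.
by rewrite IH // (leq_trans _ jm) // ltnW.
Qed.

End LinearRecurrence.

Lemma linrec_at0 (B : comPzRingType) m (c : nat -> B) (w : int -> B) :
    (0 < m)%N -> init_window m w -> c 0%N = 1 -> linrec m c w 0 ->
  c m * w (- m%:Z) = -1.
Proof.
case: m c w => // n c w _ [w0 wneg] c0 /linrec_solve_last.
rewrite sub0r => ->; congr (- _).
rewrite big_ord_recl /= c0 subr0 w0 mulr1 big1 ?addr0 // => j _.
by rewrite sub0r wneg ?mulr0 // /bump leq0n add1n /= ltnS.
Qed.

Lemma rmorph_series_inv (B B' : comPzRingType) (f : {rmorphism B -> B'}) w n :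
  f (series_inv w n) = series_inv (f \o w) n.
Proof.
elim/ltn_ind: n => -[|n] IH; first by rewrite !series_inv0 rmorph1.
rewrite !series_invS rmorphN rmorph_sum; congr (- _); apply: eq_bigr => j _.
by rewrite rmorphM IH.
Qed.

Lemma linrec_eq_window (B : comPzRingType) m (c : nat -> B) (w1 w2 : int -> B) :
    c 0%N = 1 -> GRing.lreg (c m) ->
    (forall k, linrec m c w1 k) -> (forall k, linrec m c w2 k) ->
    (forall i : nat, (i < m)%N -> w1 (- i%:Z) = w2 (- i%:Z)) ->
  w1 =1 w2.
Proof.
move=> c0 cmR r1 r2 w12.
have back (i : nat) : w1 (- i%:Z) = w2 (- i%:Z).
  elim/ltn_ind: i => i IH; case: (ltnP i m) => im; first exact: w12.
  have e1 := linrec_solve_last (r1 (m%:Z - i%:Z)).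
  have e2 := linrec_solve_last (r2 (m%:Z - i%:Z)).
  rewrite (_ : - i%:Z = m%:Z - i%:Z - m%:Z); last by lia.
  apply: cmR; rewrite e1 e2; congr (- _); apply: eq_bigr => j _.
  rewrite (_ : _ - j%:Z = - (i - m + j)%N%:Z) ?IH //; have := ltn_ord j; lia.
have fwd (i : nat) : w1 i%:Z = w2 i%:Z.
  elim/ltn_ind: i => -[|i] IH; first exact: (back 0%N).
  rewrite (linrec_solve_first c0 (r1 _)) (linrec_solve_first c0 (r2 _)).
  congr (- _); apply: eq_bigr => j _; congr (_ * _).
  case: (leqP j.+1 i.+1) => ji.
    by rewrite (_ : _ - _ = (i.+1 - j.+1)%N%:Z) ?IH //; lia.
  by rewrite (_ : _ - _ = - (j.+1 - i.+1)%N%:Z) ?back //; lia.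
by case=> k; [exact: fwd | rewrite NegzE; exact: back].
Qed.

Section HankelMinors.
Variables (B : comPzRingType) (m : nat).
Implicit Types (c : nat -> B) (w : int -> B).

Lemma sum_rev_coef c w (s : int) :
  \sum_(b < m.+1) w (s + b%:Z) * c (m - b)%N =
  \sum_(j < m.+1) c j * w (s + m%:Z - j%:Z).
Proof.
rewrite (reindex_inj rev_ord_inj); apply: eq_bigr => j _ /=.
rewrite mulrC subSS subKn ?leq_ord //; congr (_ * w _).
by have := ltn_ord j; lia.
Qed.

Lemma sum_mul_eq_natr n (F : 'I_n -> B) (t : 'I_n) :
  \sum_(b < n) F b * (b == t)%:R = F t.
Proof.
rewrite (bigD1 t) //= eqxx mulr1 big1 ?addr0 // => b /negPf ->.
by rewrite mulr0.
Qed.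

(* The recurrence puts (c_m, ..., c_0) in the kernel of every Hankel matrix, and
   the adjugate turns this into det * c_0 = 0. *)
Lemma RI_linrec c w : c 0%N = 1 -> (forall k, linrec m c w k) ->
  forall I : 'I_m.+1 -> int, RI w I = 0.
Proof.
move=> c0 cw I; rewrite /RI.
set M := \matrix_(a, b) _.
have MV : M *m \col_b c (m - b)%N = 0.
  apply/matrixP => a j; rewrite !mxE.
  under eq_bigr => b _ do rewrite !mxE.
  by rewrite sum_rev_coef; apply: cw.
have := congr1 (mulmx (\adj M)) MV.
rewrite mulmxA mul_adj_mx mul_scalar_mx mulmx0 => /matrixP /(_ ord_max 0).
by rewrite !mxE subnn c0 mulr1.
Qed.

(* Rows [1-m, ..., -1, 0 | k-m] of the Hankel matrix; after reversing the first
   m columns and replacing the last one by the recurrence sum, the matrix is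
   lower triangular with diagonal (1, ..., 1, recurrence sum at k). *)
Lemma linrec_RI c w : init_window m w ->
    (forall k : nat, (0 < k <= m)%N -> linrec m c w k) ->
    (forall I : 'I_m.+1 -> int, RI w I = 0) ->
  forall k, linrec m c w k.
Proof.
move=> [w0 wneg] cw wRI k.
pose I (a : 'I_m.+1) := if (a < m)%N then a%:Z - m%:Z + 1 else k - m%:Z.
pose E : 'M[B]_m.+1 := \matrix_(b, j)
  if (j < m)%N then (b == inord (m.-1 - j))%:R else c (m - b)%N.
have NE (a j : 'I_m.+1) : (\matrix_(a, b) w (I a + b%:Z) *m E) a j =
    if (j < m)%N then w (I a + (m.-1 - j)%N%:Z)
    else \sum_(j < m.+1) c j * w (I a + m%:Z - j%:Z).
  rewrite mxE; under eq_bigr => b _ do rewrite !mxE.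
  case: ifP => jm; last by rewrite sum_rev_coef.
  by rewrite sum_mul_eq_natr inordK //; lia.
have := congr1 (fun x => x * \det E) (wRI I); rewrite mul0r /RI -det_mulmx.
rewrite det_trig; last first.
  apply/is_trig_mxP => i j ij; rewrite NE.
  have im : (i < m)%N by have := ltn_ord j; lia.
  rewrite /I im; case: ifP => jm.
    by rewrite (_ : _ + _ = - (j - i)%N%:Z) ?wneg //; lia.
  by rewrite (_ : _ + _ = i.+1%:Z) ?cw //; lia.
rewrite big_ord_recr /= big1 ?mul1r => [|i _].
  by rewrite NE /= ltnn /I /= ltnn subrK.
rewrite NE /= ltn_ord /I /= ltn_ord.
by rewrite (_ : _ + _ = 0) //; have := ltn_ord i; lia.
Qed.

End HankelMinors.

Section CompanionOrbit.
Variables (B : comPzRingType) (n : nat) (c : nat -> B) (ci : B).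
Hypotheses (c0 : c 0%N = 1) (cK : c n.+1 * ci = 1).

(* A window y stands for (w_(T-n), ..., w_T); the shifts move T by +1 and -1,
   solving the recurrence for w_(T+1), resp. w_(T-n-1).  The orbit starts from
   the window (0, ..., 0, 1) at T = 0. *)
Definition shift_fwd (y : nat -> B) : nat -> B := fun i =>
  if i == n then - \sum_(j < n.+1) c j.+1 * y (n - j)%N else y i.+1.

Definition shift_bwd (y : nat -> B) : nat -> B := fun i =>
  if i == 0%N then - ci * \sum_(j < n.+1) c j * y (n - j)%N else y i.-1.

Lemma shift_bwdK : cancel shift_bwd shift_fwd.
Proof.
move=> y; apply: functional_extensionality => i; rewrite /shift_fwd.
case: eqP => [->|//]; rewrite big_ord_recr /= subnn {2}/shift_bwd eqxx.
rewrite big_ord_recl /= subn0 c0 mul1r.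
have bwd (j : 'I_n) : shift_bwd y (n - j)%N = y (n - j.+1)%N.
  by rewrite /shift_bwd ifF; [congr y|]; have := ltn_ord j; lia.
under eq_bigr => j _ do rewrite bwd.
by rewrite mulNr mulrN mulrA cK mul1r opprB addrK.
Qed.

Definition orbit_window (T : int) : nat -> B :=
  let e := fun i => (i == n)%:R in
  match T with Posz k => iter k shift_fwd e | Negz k => iter k.+1 shift_bwd e end.

Definition linrec_sol (T : int) : B := orbit_window T n.

Lemma orbit_windowS T : orbit_window (T + 1) = shift_fwd (orbit_window T).
Proof.
case: T => [k|[|k]]; last 1 first.
- by rewrite (_ : Negz k.+1 + 1 = Negz k) /= ?shift_bwdK //; lia.
- by rewrite (_ : k%:Z + 1 = k.+1%:Z) //; lia.
- by rewrite /= shift_bwdK.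
Qed.

Lemma orbit_window_pred T : orbit_window T = shift_fwd (orbit_window (T - 1)).
Proof. by rewrite -orbit_windowS subrK. Qed.

Lemma orbit_window_sub T d :
  (d <= n)%N -> orbit_window T (n - d)%N = linrec_sol (T - d%:Z).
Proof.
elim: d T => [|d IH] T dn; first by rewrite subn0 subr0.
rewrite orbit_window_pred /shift_fwd ifF; last by lia.
rewrite (_ : (n - d.+1).+1 = n - d)%N; last by lia.
by rewrite IH; [congr linrec_sol|]; lia.
Qed.

Lemma linrec_linrec_sol k : linrec n.+1 c linrec_sol k.
Proof.
rewrite /linrec big_ord_recl /= c0 mul1r subr0 {1}/linrec_sol.
rewrite orbit_window_pred /shift_fwd eqxx addrC; apply/eqP.
rewrite subr_eq0; apply/eqP; apply: eq_bigr => j _.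
rewrite orbit_window_sub; last by have := ltn_ord j; lia.
by rewrite /bump leq0n add1n; congr (_ * linrec_sol _); lia.
Qed.

Lemma init_window_linrec_sol : init_window n.+1 linrec_sol.
Proof.
split=> [|i i_n]; first by rewrite /linrec_sol /= eqxx.
rewrite -sub0r -orbit_window_sub /=; last by lia.
by rewrite (_ : ((n - i)%N == n) = false) //; apply/eqP; lia.
Qed.

End CompanionOrbit.

Section SymLaurentGenerators.
Variable n : nat.
Local Notation M := n.+1.
Local Notation L := (SymLaurent M).
Local Notation "x %:F" := (tofracF x).
Local Notation S := [tuple mesym M int i.+1 | i < M].

Definition toL (x : Frac M) : L := insubd 0 x.

Lemma val_toL x : x \in symLaurent_pred M -> val (toL x) = x.
Proof. exact: insubdK. Qed.

Lemma sym_symLaurent p : p \is symmetric -> p%:F \in symLaurent_pred M.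
Proof.
by move=> sp; apply/symLaurentP; exists 0%N, p; rewrite expr0 rmorph1 divr1.
Qed.

Definition esymL j : L := toL (mesym M int j)%:F.

Lemma esymLE j : val (esymL j) = (mesym M int j)%:F.
Proof. by rewrite val_toL // sym_symLaurent // mesym_sym. Qed.

Lemma esymL0 : esymL 0 = 1.
Proof. by apply: val_inj; rewrite esymLE mesym0E rmorph1. Qed.

Definition xprodVL : L := toL (xprod M)%:F^-1.

Lemma xprodVLE : val xprodVL = (xprod M)%:F^-1.
Proof.
rewrite val_toL //; apply/symLaurentP; exists 1%N, 1.
by rewrite rpred1 expr1 rmorph1 div1r.
Qed.

Lemma xprodVL_esym : xprodVL * esymL M = 1.
Proof.
apply: val_inj; rewrite rmorphM /= xprodVLE esymLE mesymnnE -/(xprod M).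
by rewrite mulVf // xprod_neq0.
Qed.

Definition ecoefL j : L := (-1) ^+ j * esymL j.

Lemma ecoefL0 : ecoefL 0 = 1.
Proof. by rewrite /ecoefL esymL0 mulr1. Qed.

Lemma ecoefL_inv : ecoefL M * ((-1) ^+ M * xprodVL) = 1.
Proof.
rewrite /ecoefL mulrACA -exprMn mulrNN mulr1 expr1n mul1r.
by rewrite mulrC xprodVL_esym.
Qed.

(* For k >= 0 this is the complete homogeneous symmetric function h_k. *)
Definition hL : int -> L := linrec_sol n ecoefL ((-1) ^+ M * xprodVL).

Lemma linrec_hL k : linrec M ecoefL hL k.
Proof. exact: (linrec_linrec_sol ecoefL0 ecoefL_inv). Qed.

Lemma init_window_hL : init_window M hL.
Proof. exact: (init_window_linrec_sol ecoefL0 ecoefL_inv). Qed.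

Lemma ecoefL_series_inv j : (j <= M)%N -> ecoefL j = series_inv hL j.
Proof.
apply: linrec_coef_series_inv; [exact: init_window_hL | exact: ecoefL0 |].
by move=> k _; apply: linrec_hL.
Qed.

Definition esym_evalL (t : {mpoly int[M]}) : L :=
  mmap intr (fun i : 'I_M => esymL i.+1) t.

Lemma esym_evalLE t : val (esym_evalL t) = (t \mPo S)%:F.
Proof.
rewrite /esym_evalL /mmap comp_mpolyEX !rmorph_sum; apply: eq_bigr => mo _.
rewrite rmorphM rmorph_int -mul_mpolyC rmorphM; congr (_ * _).
  by rewrite -[in RHS](intz t@_mo) !rmorph_int.
rewrite comp_mpolyX /mmap1 !rmorph_prod; apply: eq_bigr => i _.
by rewrite !rmorphXn /= esymLE tnth_mktuple.
Qed.

Lemma symLaurent_decomp (x : L) : exists t k, x = esym_evalL t * xprodVL ^+ k.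
Proof.
have /symLaurentP [k [p [sp xE]]] := valP x.
have [t [tE _]] := sym_fundamental sp.
exists t, k; apply: val_inj; rewrite rmorphM rmorphXn /= esym_evalLE tE xE xprodVLE.
by rewrite rmorphXn /= exprVn.
Qed.

Lemma eq_rmorph_esym_evalL (B : comPzRingType) (f1 f2 : {rmorphism L -> B}) t :
  (forall i : 'I_M, f1 (esymL i.+1) = f2 (esymL i.+1)) ->
  f1 (esym_evalL t) = f2 (esym_evalL t).
Proof.
move=> f12; rewrite /esym_evalL /mmap !rmorph_sum; apply: eq_bigr => mo _.
rewrite !rmorphM !rmorph_int /mmap1 !rmorph_prod; congr (_ * _).
by apply: eq_bigr => i _; rewrite !rmorphXn f12.
Qed.

Lemma eq_rmorph_hL (B : comPzRingType) (f1 f2 : {rmorphism L -> B}) :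
  f1 \o hL =1 f2 \o hL -> f1 =1 f2.
Proof.
move=> /functional_extensionality f12.
have fc j : (j <= M)%N -> f1 (ecoefL j) = f2 (ecoefL j).
  by move=> jM; rewrite ecoefL_series_inv // !rmorph_series_inv f12.
have fe j : (j <= M)%N -> f1 (esymL j) = f2 (esymL j).
  have -> : esymL j = (-1) ^+ j * ecoefL j.
    by rewrite /ecoefL mulrA -exprMn mulrNN mulr1 expr1n mul1r.
  by move=> jM; rewrite (rmorphM f1) (rmorphM f2) fc // !rmorphXn !rmorphN !rmorph1.
have fV : f1 xprodVL = f2 xprodVL.
  have /(congr1 f1) := xprodVL_esym; have /(congr1 f2) := xprodVL_esym.
  rewrite !rmorphM !rmorph1 -fe // => f2V f1V.
  by rewrite -[LHS]mulr1 -f2V mulrCA f1V mulr1.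
move=> x; have [t [k ->]] := symLaurent_decomp x.
by rewrite !rmorphM !rmorphXn fV (eq_rmorph_esym_evalL (f2 := f2)) // => i; rewrite fe.
Qed.

End SymLaurentGenerators.

Arguments hL : simpl never.

Lemma symf_eq (R : comNzRingType) n (p t : {mpoly R[n]}) : p \is symmetric ->
  t \mPo [tuple mesym n R i.+1 | i < n] = p -> symf p = t.
Proof. by move=> sp tp; apply: msym_fundamental_un; rewrite tp; apply/esym/symfP. Qed.

Section SymLaurentMorphism.
Variables (n : nat) (B : comNzRingType) (b : nat -> B) (bV : B).
Hypothesis bK : b n.+1 * bV = 1.
Local Notation M := n.+1.
Local Notation L := (SymLaurent M).
Local Notation X := (xprod M).
Local Notation "x %:F" := (tofracF x).
Local Notation S := [tuple mesym M int i.+1 | i < M].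
Local Notation esym_eval := (mmap intr (fun i : 'I_M => b i.+1)).

Definition sym_eval (p : {mpoly int[M]}) : B := esym_eval (symf p).

Lemma sym_evalD p q : p \is symmetric -> q \is symmetric ->
  sym_eval (p + q) = sym_eval p + sym_eval q.
Proof.
move=> sp sq; rewrite /sym_eval -rmorphD (symf_eq (t := symf p + symf q)) ?rpredD //.
by rewrite raddfD; congr (_ + _); apply/esym/symfP.
Qed.

Lemma sym_evalM p q : p \is symmetric -> q \is symmetric ->
  sym_eval (p * q) = sym_eval p * sym_eval q.
Proof.
move=> sp sq; rewrite /sym_eval -rmorphM (symf_eq (t := symf p * symf q)) ?rpredM //.
by rewrite rmorphM; congr (_ * _); apply/esym/symfP.
Qed.

Lemma sym_eval_esym j : (0 < j <= M)%N -> sym_eval (mesym M int j) = b j.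
Proof.
move=> /andP [j0 jM]; have jM' : (j.-1 < M)%N by rewrite prednK.
rewrite /sym_eval (symf_eq (t := 'X_(Ordinal jM'))) ?mesym_sym //.
  by rewrite mmapX mmap1U prednK.
by rewrite comp_mpolyXU -tnth_nth tnth_mktuple prednK.
Qed.

Lemma sym_eval_xprodX k : sym_eval (X ^+ k) = b M ^+ k.
Proof.
elim: k => [|k IH].
  by rewrite !expr0 /sym_eval (symf_eq (p := 1) (t := 1)) ?rpred1 ?rmorph1
    ?comp_mpoly1.
rewrite !exprS sym_evalM ?rpredX ?xprod_sym // IH.
by rewrite /xprod -mesymnnE sym_eval_esym ?leqnn.
Qed.

Lemma symLaurent_rep (x : L) : exists kp : nat * {mpoly int[M]},
  kp.2 \is symmetric /\ val x = kp.2%:F / (X ^+ kp.1)%:F.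
Proof. by have /symLaurentP [k [p xE]] := valP x; exists (k, p). Qed.

Definition symL_eval (x : L) : B :=
  let kp := proj1_sig (constructive_indefinite_description _ (symLaurent_rep x)) in
  sym_eval kp.2 * bV ^+ kp.1.

Lemma xprodX_neq0 k : (X ^+ k)%:F != 0 :> Frac M.
Proof. by rewrite rmorphXn expf_neq0 // xprod_neq0. Qed.

Lemma mul_bX_bVX k : b M ^+ k * bV ^+ k = 1.
Proof. by rewrite -exprMn bK expr1n. Qed.

Lemma symL_evalE x k p : p \is symmetric -> val x = p%:F / (X ^+ k)%:F ->
  symL_eval x = sym_eval p * bV ^+ k.
Proof.
rewrite /symL_eval; case: constructive_indefinite_description => -[l q] /= [sq xE] sp.
rewrite xE => /eqP; rewrite eqr_div ?xprodX_neq0 // -!rmorphM tofrac_eq => /eqP.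
move=> /(congr1 sym_eval); rewrite !sym_evalM ?rpredX ?xprod_sym // !sym_eval_xprodX.
move=> qp; rewrite -[LHS]mulr1 -(mul_bX_bVX k) mulrACA qp.
by rewrite -mulrA (mulrA (b M ^+ l)) mul_bX_bVX mul1r.
Qed.

Lemma sym_eval1 : sym_eval 1 = 1.
Proof. by have := sym_eval_xprodX 0; rewrite !expr0. Qed.

Lemma symL_evalD : {morph symL_eval : x y / x + y}.
Proof.
move=> x y; have [[k p] /= [sp xE]] := symLaurent_rep x.
have [[l q] /= [sq yE]] := symLaurent_rep y.
rewrite (symL_evalE sp xE) (symL_evalE sq yE).
rewrite (@symL_evalE _ (k + l) (p * X ^+ l + q * X ^+ k)); first last.
- by rewrite rmorphD /= xE yE addf_div ?xprodX_neq0 // exprD !rmorphD !rmorphM.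
- by rewrite rpredD // rpredM // rpredX // xprod_sym.
rewrite sym_evalD ?rpredM ?rpredX ?xprod_sym // !sym_evalM ?rpredX ?xprod_sym //.
rewrite !sym_eval_xprodX exprD mulrDl -!mulrA; congr (_ * _ + _ * _).
  by rewrite mulrCA mul_bX_bVX mulr1.
by rewrite mulrA mul_bX_bVX mul1r.
Qed.

Lemma symL_evalM : {morph symL_eval : x y / x * y}.
Proof.
move=> x y; have [[k p] /= [sp xE]] := symLaurent_rep x.
have [[l q] /= [sq yE]] := symLaurent_rep y.
rewrite (symL_evalE sp xE) (symL_evalE sq yE) (@symL_evalE _ (k + l) (p * q)).
- by rewrite sym_evalM // exprD mulrACA.
- exact: rpredM.
- by rewrite rmorphM /= xE yE mulf_div exprD !rmorphM.
Qed.

Lemma symL_eval1 : symL_eval 1 = 1.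
Proof.
rewrite (@symL_evalE _ 0 1) ?rpred1 ?sym_eval1 ?mulr1 //.
by rewrite expr0 !rmorph1 divr1.
Qed.

Lemma symL_eval0 : symL_eval 0 = 0.
Proof. by apply/(addrI (symL_eval 0)); rewrite -symL_evalD !addr0. Qed.

Lemma exists_rmorph_symLaurent : exists f : {rmorphism L -> B},
  (forall j, (0 < j <= M)%N -> f (esymL n j) = b j) /\ f (xprodVL n) = bV.
Proof.
pose f : {rmorphism L -> B} := HB.pack symL_eval
  (GRing.isNmodMorphism.Build _ _ symL_eval (symL_eval0, symL_evalD))
  (GRing.isMonoidMorphism.Build _ _ symL_eval (symL_eval1, symL_evalM)).
exists f; split=> [j jM|] /=.
  rewrite (@symL_evalE _ 0 (mesym M int j)) ?mesym_sym ?sym_eval_esym ?mulr1 //.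
  by rewrite esymLE expr0 rmorph1 divr1.
rewrite (@symL_evalE _ 1 1) ?rpred1 ?sym_eval1 ?mul1r ?expr1 //.
by rewrite xprodVLE.
Qed.

End SymLaurentMorphism.

Lemma exists_rmorph_hL_nz n (B : comNzRingType) (w : int -> B) : init_window n.+1 w ->
    (forall I : 'I_n.+2 -> int, RI w I = 0) ->
  exists f : {rmorphism SymLaurent n.+1 -> B}, f \o hL n =1 w.
Proof.
move=> ww wRI; pose c := series_inv w.
have cw k : linrec n.+1 c w k.
  by apply: linrec_RI => // j jM; apply: linrec_series_inv.
have cK : c n.+1 * - w (- n.+1%:Z) = 1.
  by rewrite mulrN (linrec_at0 _ ww) ?opprK.
pose b j := (-1) ^+ j * c j.
have bK : b n.+1 * ((-1) ^+ n.+1 * - w (- n.+1%:Z)) = 1.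
  by rewrite mulrACA -exprMn mulrNN mulr1 expr1n mul1r.
have [f [fe _]] := exists_rmorph_symLaurent bK.
have fc (j : 'I_n.+2) : f (ecoefL n j) = c j.
  case: j => -[|j] jM /=; first by rewrite ecoefL0 rmorph1.
  rewrite rmorphM rmorphXn rmorphN rmorph1 fe // /b mulrA -exprMn mulrNN.
  by rewrite mulr1 expr1n mul1r.
exists f; apply: (linrec_eq_window (c := c)) => //.
- by apply: (@GRing.lregMl _ (- w (- n.+1%:Z))); rewrite mulrC cK; exact: lreg1.
- move=> k; rewrite /linrec -[RHS](rmorph0 f) -(linrec_hL n k) rmorph_sum.
  by apply: eq_bigr => j _; rewrite rmorphM fc.
- case: (init_window_hL n) => h0 hneg; case: ww => w0 wneg.
  move=> i iM; rewrite /comp; case: i iM => [|i] iM.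
    by rewrite oppr0 h0 w0 rmorph1.
  by rewrite hneg ?wneg ?rmorph0.
Qed.

(* [mmap] needs a nontrivial codomain, so the trivial ring is split off. *)
Definition nz_ring (B : comPzRingType) (B1 : (1 : B) != 0) : Type := B.
HB.instance Definition _ (B : comPzRingType) (B1 : (1 : B) != 0) :=
  GRing.ComPzRing.on (nz_ring B1).
HB.instance Definition _ (B : comPzRingType) (B1 : (1 : B) != 0) :=
  GRing.PzSemiRing_isNonZero.Build (nz_ring B1) B1.

Lemma exists_rmorph_hL n (B : comPzRingType) (w : int -> B) : init_window n.+1 w ->
    (forall I : 'I_n.+2 -> int, RI w I = 0) ->
  exists f : {rmorphism SymLaurent n.+1 -> B}, f \o hL n =1 w.
Proof.
move=> ww wRI; have [B0|B1] := eqVneq (1 : B) 0; last first.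
  by have [f fw] := @exists_rmorph_hL_nz n (nz_ring B1) w ww wRI; exists f.
have B0x (x : B) : x = 0 by rewrite -[x]mulr1 B0 mulr0.
pose f : {rmorphism SymLaurent n.+1 -> B} := HB.pack (fun _ : SymLaurent n.+1 => 0 : B)
  (GRing.isNmodMorphism.Build _ _ _ (erefl, fun _ _ => esym (addr0 0)))
  (GRing.isMonoidMorphism.Build _ _ _ (esym B0, fun _ _ => esym (mulr0 0))).
by exists f => k; rewrite [RHS]B0x.
Qed.

Lemma presents_transfer (A : comNzRingType) (K G : Type) (a : K -> A) (g : G -> A)
    (rel : forall B : comPzRingType, (K -> B) -> Prop)
    (rel' : forall B : comPzRingType, (G -> B) -> Prop)
    (W : forall B : comPzRingType, (G -> B) -> K -> B) :
    presents a rel -> W A g = a ->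
    (forall B h, rel' B h <-> rel B (W B h)) ->
    (forall (B : comPzRingType) (f : {rmorphism A -> B}) h k,
      f (W A h k) = W B (f \o h) k) ->
    (forall (B : comPzRingType) (f : {rmorphism A -> B}) h,
      (forall k, f (a k) = W B h k) -> forall x, f (g x) = h x) ->
  presents g rel'.
Proof.
move=> [rel_a a_univ] Wg relE Wnat recover.
split; first by apply/relE; rewrite Wg.
move=> B h /relE /a_univ [[f fa] funiq]; split; first by exists f; apply: recover.
move=> f1 f2 f1g f2g; apply: funiq => k /=; rewrite -Wg Wnat; congr (W B _ k);
  exact: functional_extensionality.
Qed.

Lemma useq_lt0 (B : comPzRingType) (c : nat -> B) i : i < 0 -> useq c i = 0.
Proof. by case: i. Qed.

Lemma vseq_lt0 (B : comPzRingType) (c : nat -> B) i : i < 0 -> vseq c i = 0.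
Proof. by case: i. Qed.

Lemma rmorph_useq (B B' : comPzRingType) (f : {rmorphism B -> B'}) c i :
  f (useq c i) = useq (f \o c) i.
Proof. by case: i => [[|k]|k] /=; rewrite ?rmorph1 ?rmorph0. Qed.

Lemma rmorph_vseq (B B' : comPzRingType) (f : {rmorphism B -> B'}) c i :
  f (vseq c i) = vseq (f \o c) i.
Proof. by case: i => [k|k] /=; rewrite ?rmorph0. Qed.

Definition window_rel m (B : comPzRingType) (w : int -> B) : Prop :=
  init_window m w /\ forall I : 'I_m.+1 -> int, RI w I = 0.
Arguments window_rel m B w : clear implicits.

Lemma presents_hL n : presents (hL n) (window_rel n.+1).
Proof.
split.
  by split; [exact: init_window_hL | exact: RI_linrec (ecoefL0 n) (linrec_hL n)].
move=> B w [ww wRI]; split; first exact: exists_rmorph_hL.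
by move=> f1 f2 f1w f2w; apply: eq_rmorph_hL => k /=; rewrite f1w f2w.
Qed.

Section Presentations.
Variable n : nat.
Local Notation M := n.+1.
Local Notation L := (SymLaurent M).

Lemma init_window_w_plus (B : comPzRingType) (h : gensUplus -> B) :
  init_window M (w_plus M h).
Proof.
split=> [|i iM]; first by rewrite /w_plus vseq_lt0 ?subr0 //; lia.
by rewrite /w_plus useq_lt0 ?vseq_lt0 ?subr0 //; lia.
Qed.

Definition g_plus (x : gensUplus) : L :=
  match x with inl k => hL n k.+1 | inr k => - hL n (- M%:Z - k%:Z) end.

Lemma w_plus_g : w_plus M g_plus = hL n.
Proof.
have [h0 hneg] := init_window_hL n.
apply: functional_extensionality => -[[|k]|k]; rewrite /w_plus.
- by rewrite vseq_lt0 ?subr0 //; lia.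
- by rewrite vseq_lt0 ?subr0 //; lia.
rewrite useq_lt0 // sub0r; case: (ltnP k n) => kn.
  by rewrite vseq_lt0 ?oppr0 ?NegzE ?hneg //; lia.
rewrite (_ : _ - _ = (k - n)%N%:Z) /= ?opprK; last by rewrite NegzE; lia.
by congr (hL n); rewrite NegzE; lia.
Qed.

Lemma presents_g_plus : presents g_plus (rel_Uplus M).
Proof.
apply: (presents_transfer (presents_hL n) w_plus_g).
- move=> B h; split=> [hRI|[]//]; split=> //; exact: init_window_w_plus.
- by move=> B f h k; rewrite /w_plus rmorphB rmorph_useq rmorph_vseq.
move=> B f h fw [k|k] /=.
  by rewrite fw /w_plus vseq_lt0 ?subr0 //; lia.
rewrite rmorphN fw /w_plus useq_lt0; last by lia.
by rewrite (_ : _ - _ = k%:Z) ?sub0r ?opprK //; lia.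
Qed.

Lemma init_window_w_pm (B : comPzRingType) (h : gensUpm -> B) :
  init_window M (w_pm M h).
Proof.
split=> [|i iM]; first by rewrite /w_pm (@useq_lt0 _ _ (_ - 0)) ?mulr0 ?subr0 //; lia.
by rewrite /w_pm !useq_lt0 ?mulr0 ?subr0 //; lia.
Qed.

Lemma ecoefL_hL : ecoefL n M * hL n (- M%:Z) = -1.
Proof. exact: linrec_at0 (init_window_hL n) (ecoefL0 n) (linrec_hL n 0). Qed.

Definition g_pm (x : gensUpm) : L :=
  match x with
  | None => - hL n (- M%:Z)
  | Some (inl k) => hL n k.+1
  | Some (inr k) => - ecoefL n M * hL n (- M%:Z - k.+1%:Z)
  end.

Lemma w_pm_g : w_pm M g_pm = hL n.
Proof.
have [h0 hneg] := init_window_hL n.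
apply: functional_extensionality => -[[|k]|k]; rewrite /w_pm.
- by rewrite (@useq_lt0 _ _ (_ - _)) ?mulr0 ?subr0 //; lia.
- by rewrite (@useq_lt0 _ _ (_ - _)) ?mulr0 ?subr0 //; lia.
rewrite useq_lt0 // sub0r; case: (ltngtP k n) => kn.
- by rewrite useq_lt0 ?mulr0 ?oppr0 ?NegzE ?hneg //; lia.
- rewrite (_ : _ - _ = (k - M).+1%N%:Z) /=; last by rewrite NegzE; lia.
  rewrite mulNr opprK mulNr mulrN mulrA (mulrC (hL n _)) ecoefL_hL mulN1r opprK.
  by congr (hL n); rewrite NegzE; lia.
- rewrite kn (_ : _ - _ = 0); last by rewrite NegzE; lia.
  by rewrite /= mulr1 opprK NegzE.
Qed.

Lemma presents_g_pm : presents g_pm (rel_Upm M).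
Proof.
apply: (presents_transfer (presents_hL n) w_pm_g).
- move=> B h; split=> [hRI|[]//]; split=> //; exact: init_window_w_pm.
- by move=> B f h k; rewrite /w_pm rmorphB rmorphM !rmorph_useq.
move=> B f h fw.
have fwM : f (hL n (- M%:Z)) = - h None.
  by rewrite fw /w_pm useq_lt0 ?subrr /= ?mulr1 ?sub0r //; lia.
have fcK : f (ecoefL n M) * h None = 1.
  by apply: oppr_inj; rewrite -mulrN -fwM -rmorphM ecoefL_hL rmorphN rmorph1.
case=> [[k|k]|] /=.
- by rewrite fw /w_pm (@useq_lt0 _ _ (_ - _)) ?mulr0 ?subr0 //; lia.
- rewrite rmorphM rmorphN fw /w_pm useq_lt0; last by lia.
  rewrite (_ : _ - _ = k.+1%:Z) /=; last by lia.
  by rewrite sub0r mulrN mulNr opprK mulrA fcK mul1r.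
- by rewrite rmorphN fwM opprK.
Qed.

End Presentations.

Theorem mainTheorem6 (m : nat) : (1 <= m)%N ->
  (exists g : gensUplus -> SymLaurent m, presents g (rel_Uplus m)) /\
  (exists g : gensUpm -> SymLaurent m, presents g (rel_Upm m)).
Proof.
case: m => // n _; split; [exists (g_plus n) | exists (g_pm n)].
  exact: presents_g_plus.
exact: presents_g_pm.
Qed.
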